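(* Let $\mathcal X\subseteq\mathbb R^d$ be open, let $\phi\in C^3(\mathbb R^d)$ be such that $k(x,y)=\phi(x-y)$ is a positive definite scalar kernel (so $\phi$ is even), and let $\mathcal K_{\mathrm{cf}}(x,y):=-\nabla^2\phi(x-y)$ (the curl-free kernel). Let $x^1,\dots,x^M\in\mathcal X$ and $\lambda>0$. Define the KEF estimator $$\hat f_{p,\lambda}(y)=\sum_{m=1}^M\sum_{j=1}^dc_{(m-1)d+j}\,\partial_jk(x^m,y)-\frac{\hat\xi(y)}{\lambda},\qquad \hat\xi(y)=\frac1M\sum_{m=1}^M\sum_{j=1}^d\partial_j^2k(x^m,y),$$ where $\partial_j$ denotes differentiation with respect to the $j$-th coordinate of the first argument and $\mathbf c\in\mathbb R^{Md}$ solves $(\mathbf G+M\lambda I)\mathbf c=\mathbf b/\lambda$ with $\mathbf G_{(m-1)d+i,(\ell-1)d+j}=\partial_i\partial_{j+d}k(x^m,x^\ell)$ and $\mathbf b_{(m-1)d+i}=\frac1M\sum_{\ell=1}^M\sum_{j=1}^d\partial_i\partial^2_{j+d}k(x^m,x^\ell)$ ($\partial_{j+d}$ differentiates with respect to the $j$-th coordinate of the second argument). Then the Tikhonov-regularized estimator with kernel $\mathcal K_{\mathrm{cf}}$, $\hat s^g_{p,\lambda}=-(\hat L_{\mathcal K_{\mathrm{cf}}}+\lambda I)^{-1}\hat\zeta$, satisfies $\hat s^g_{p,\lambda}=\nabla\hat f_{p,\lambda}$ on $\mathcal X$.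
   Context: For a matrix-valued positive definite kernel $\mathcal K$ with RKHS $\mathcal H$ (where $\mathcal K_xc$ denotes $y\mapsto\mathcal K(y,x)c$ and $\langle f,\mathcal K_xc\rangle_{\mathcal H}=f(x)^\top c$): $\hat L_{\mathcal K}f=\frac1M\sum_m\mathcal K_{x^m}f(x^m)$, and $\hat\zeta$ is the function $\hat\zeta(y)_i=\frac1M\sum_m\sum_{j=1}^d\frac{\partial}{\partial x_j}[\mathcal K(y,x)_{ij}]|_{x=x^m}$. $\nabla^2\phi$ is the Hessian of $\phi$. *)

From HB Require Import structures.
From mathcomp Require Import all_boot all_order all_algebra.
From mathcomp Require Import all_classical all_reals all_analysis.
Set Implicit Arguments. Unset Strict Implicit. Unset Printing Implicit Defensive.
Import Order.TTheory GRing.Theory Num.Theory.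
Import numFieldNormedType.Exports.
Local Open Scope classical_set_scope.
Local Open Scope ring_scope.

Section Defs.
Variable R : realType.
Variable d : nat.
Local Notation V := 'rV[R]_d.

Definition evec (j : 'I_d) : V := delta_mx 0 j.

Definition pd (j : 'I_d) (f : V -> R) : V -> R := 'D_(evec j) f.

Definition grad (f : V -> R) (y : V) : V := \row_i pd i f y.
Definition hess (f : V -> R) (z : V) : 'M[R]_d := \matrix_(i, j) pd i (pd j f) z.

Definition C3 (phi : V -> R) : Prop :=
  forall (i j l : 'I_d) (x : V),
    [/\ differentiable phi x, differentiable (pd i phi) x,
        differentiable (pd j (pd i phi)) x &
        {for x, continuous (pd l (pd j (pd i phi)))}].

Definition pd_kernel (k : V -> V -> R) : Prop :=
  (forall x y, k x y = k y x) /\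
  forall (n : nat) (pts : 'I_n -> V) (a : 'I_n -> R),
    0 <= \sum_(i < n) \sum_(j < n) a i * a j * k (pts i) (pts j).

Definition tkernel (phi : V -> R) : V -> V -> R := fun x y => phi (x - y).

Definition Kcf (phi : V -> R) (x y : V) : 'M[R]_d := - hess phi (x - y).

(* derivatives of a two-argument kernel k:
   d1 j k x y = partial_j k (x,y)   (j-th coordinate of the first argument)
   d2 j k x y = partial_{j+d} k (x,y) (j-th coordinate of the second argument) *)
Definition d1 (j : 'I_d) (k : V -> V -> R) : V -> V -> R :=
  fun x y => pd j (fun x' => k x' y) x.
Definition d2 (j : 'I_d) (k : V -> V -> R) : V -> V -> R :=
  fun x y => pd j (fun y' => k x y') y.

(* matrix acting on a (row-represented) vector: A c *)
Definition mxapp (A : 'M[R]_d) (c : V) : V := c *m A^T.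
Definition dotv (u v : V) : R := (u *m v^T) 0 0.

(* A (real) Hilbert space H of functions T -> R^d, with inner product ip,
   which is a reproducing kernel Hilbert space for the matrix-valued kernel K:
   K_x c := (y |-> K(y,x) c) belongs to H and <f, K_x c> = f(x)^T c. *)
Definition is_vRKHS (T : Type) (K : T -> T -> 'M[R]_d)
    (H : set (T -> V)) (ip : (T -> V) -> (T -> V) -> R) : Prop :=
  H (fun _ => 0) /\
      (forall f g, H f -> H g -> H (fun y => f y + g y)) /\
      (forall (a : R) f, H f -> H (fun y => a *: f y)) /\
      (forall f g, H f -> H g -> ip f g = ip g f) /\
      (forall (a : R) f g h, H f -> H g -> H h ->
          ip (fun y => a *: f y + g y) h = a * ip f h + ip g h) /\
      (forall f, H f -> 0 <= ip f f) /\
      (forall f, H f -> ip f f = 0 -> f = (fun _ => 0)) /\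
      (forall u : nat -> T -> V, (forall n, H (u n)) ->
         (forall e : R, 0 < e -> exists N : nat, forall n m : nat, (N <= n)%N -> (N <= m)%N ->
              ip (fun y => u n y - u m y) (fun y => u n y - u m y) < e) ->
         exists f, H f /\ forall e : R, 0 < e -> exists N : nat, forall n : nat, (N <= n)%N ->
              ip (fun y => u n y - f y) (fun y => u n y - f y) < e) /\
      (forall x c, H (fun y => mxapp (K y x) c)) /\
      (forall f x c, H f -> ip f (fun y => mxapp (K y x) c) = dotv (f x) c).

Definition Lhat (T : Type) (M : nat) (K : T -> T -> 'M[R]_d) (xs : 'I_M -> T)
    (f : T -> V) : T -> V :=
  fun y => (M%:R)^-1 *: \sum_(m < M) mxapp (K y (xs m)) (f (xs m)).

Definition zetahat (M : nat) (K : V -> V -> 'M[R]_d) (xs : 'I_M -> V) (y : V) : V :=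
  \row_i ((M%:R)^-1 * \sum_(m < M) \sum_(j < d) pd j (fun x => K y x i j) (xs m)).

(* decoding an index p in {0..Md-1} as the pair (m, i), p = m d + i *)
Definition decode (M : nat) (p : 'I_(M * d)) : 'I_M * 'I_d :=
  enum_val (cast_ord (esym (@mxvec_cast M d)) p).

Definition Gmat (M : nat) (k : V -> V -> R) (xs : 'I_M -> V) : 'M[R]_(M * d) :=
  \matrix_(p, q) d1 (decode p).2 (d2 (decode q).2 k)
                   (xs (decode p).1) (xs (decode q).1).

Definition bvec (M : nat) (k : V -> V -> R) (xs : 'I_M -> V) : 'cV[R]_(M * d) :=
  \col_p ((M%:R)^-1 * \sum_(l < M) \sum_(j < d)
            d1 (decode p).2 (d2 j (d2 j k)) (xs (decode p).1) (xs l)).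

Definition xihat (M : nat) (k : V -> V -> R) (xs : 'I_M -> V) (y : V) : R :=
  (M%:R)^-1 * \sum_(m < M) \sum_(j < d) d1 j (d1 j k) (xs m) y.

Definition fhat (M : nat) (k : V -> V -> R) (xs : 'I_M -> V) (lam : R)
    (c : 'cV[R]_(M * d)) (y : V) : R :=
  \sum_(m < M) \sum_(j < d) c (mxvec_index m j) 0 * d1 j k (xs m) y
  - xihat k xs y / lam.

End Defs.

From Pilot Require Import Defs.
From HB Require Import structures.
From mathcomp Require Import all_boot all_order all_algebra.
From mathcomp Require Import all_classical all_reals all_analysis.
From mathcomp Require Import lra ring.
Import Order.TTheory GRing.Theory Num.Theory.
Import numFieldNormedType.Exports.
Local Open Scope classical_set_scope.
Local Open Scope ring_scope.

(* Symmetry of [k] makes [phi] even, so its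
   partials alternate in parity, and Schwarz's theorem lets third partials be
   reordered.  Expressing every quantity through partials of [phi] gives:
   - [grad fhat = Kexp - zetahat / lam], where [Kexp y = sum_m K_cf(y, x^m) c_m]
     is a kernel expansion ([grad_fhat]);
   - the system [(G + M lam) c = b / lam] says exactly that at the data
     [grad fhat (x^l) = - M lam c_l] ([grad_fhat_at_data]);
   - hence [s := grad fhat] solves [(Lhat + lam) s = - zetahat] everywhere
     ([grad_fhat_solves]).
   On the RKHS side, [s] restricted to [X] lies in [H] (a kernel expansion
   minus a multiple of [zetahat]) and [Lhat] is positive semidefinite, so
   [Lhat + lam] is injective on [H] ([regularized_unique]); thus [s] is the
   regularized estimator. *)

Section AffineChange.
Context {R : numFieldType} {V : normedModType R}.
Implicit Types (f : V -> R) (x y z v : V).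

Let quot_translate f x y v :
  (fun h : R => h^-1 *: (((fun x' => f (x' - y)) \o shift x) (h *: v) - f (x - y)))
  = (fun h : R => h^-1 *: ((f \o shift (x - y)) (h *: v) - f (x - y))).
Proof. by apply: funext => h /=; rewrite addrA. Qed.

Let quot_reflect f x y v :
  (fun h : R => h^-1 *: (((fun y' => f (x - y')) \o shift y) (h *: v) - f (x - y)))
  = (fun h : R => h^-1 *: ((f \o shift (x - y)) (h *: - v) - f (x - y))).
Proof. by apply: funext => h /=; rewrite scalerN opprD addrA addrAC addrC. Qed.

Lemma derive_translate f x y v : 'D_v (fun x' => f (x' - y)) x = 'D_v f (x - y).
Proof. by rewrite /derive quot_translate. Qed.

Lemma derivable_translate f x y v :
  derivable f (x - y) v -> derivable (fun x' => f (x' - y)) x v.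
Proof. by rewrite /derivable quot_translate. Qed.

Lemma derive_oppdir f z v : differentiable f z -> 'D_(- v) f z = - 'D_v f z.
Proof. by move=> df; rewrite !deriveE // raddfN. Qed.

Lemma derive_reflect f x y v : differentiable f (x - y) ->
  'D_v (fun y' => f (x - y')) y = - 'D_v f (x - y).
Proof. by move=> df; rewrite -derive_oppdir // /derive quot_reflect. Qed.

Lemma derivable_reflect f x y v : differentiable f (x - y) ->
  derivable (fun y' => f (x - y')) y v.
Proof. by move=> /diff_derivable df; rewrite /derivable quot_reflect; apply: df. Qed.

End AffineChange.

Section PointwiseRules.
Context {R : numFieldType} {V : normedModType R}.
Implicit Types (f g : V -> R) (x v : V).

(* The library's rules for negation, subtraction and finite sums, stated for
   functions written pointwise as lambda-terms. *)
Lemma derive_oppf f x v : derivable f x v -> 'D_v (fun z => - f z) x = - 'D_v f x.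
Proof. exact: deriveN. Qed.

Lemma derive_subf f g x v : derivable f x v -> derivable g x v ->
  'D_v (fun z => f z - g z) x = 'D_v f x - 'D_v g x.
Proof. exact: deriveB. Qed.

Lemma derivable_subf f g x v : derivable f x v -> derivable g x v ->
  derivable (fun z => f z - g z) x v.
Proof. exact: derivableB. Qed.

Lemma derive_sumf n (F : 'I_n -> V -> R) x v : (forall i, derivable (F i) x v) ->
  'D_v (fun z => \sum_(i < n) F i z) x = \sum_(i < n) 'D_v (F i) x.
Proof.
move=> dF; rewrite -derive_sum //; congr ('D_v _ x).
by apply: funext => z; rewrite fct_sumE.
Qed.

Lemma derivable_sumf n (F : 'I_n -> V -> R) x v : (forall i, derivable (F i) x v) ->
  derivable (fun z => \sum_(i < n) F i z) x v.
Proof.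
move=> dF; rewrite (_ : (fun z => _) = \sum_(i < n) F i); first exact: derivable_sum.
by apply: funext => z; rewrite fct_sumE.
Qed.

Lemma derive_lincomb n p (a : 'I_n -> 'I_p -> R) (F : 'I_n -> 'I_p -> V -> R) x v :
  (forall m j, derivable (F m j) x v) ->
  'D_v (fun z => \sum_(m < n) \sum_(j < p) a m j * F m j z) x
  = \sum_(m < n) \sum_(j < p) a m j * 'D_v (F m j) x.
Proof.
move=> dF; rewrite derive_sumf => [|m]; last first.
  by apply: derivable_sumf => j; apply: derivableM.
apply: eq_bigr => m _; rewrite derive_sumf => [|j]; last exact: derivableM.
by apply: eq_bigr => j _; rewrite -deriveMl.
Qed.

Lemma derivable_lincomb n p (a : 'I_n -> 'I_p -> R) (F : 'I_n -> 'I_p -> V -> R) x v :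
  (forall m j, derivable (F m j) x v) ->
  derivable (fun z => \sum_(m < n) \sum_(j < p) a m j * F m j z) x v.
Proof.
by move=> dF; apply: derivable_sumf => m; apply: derivable_sumf => j; apply: derivableM.
Qed.

Lemma derive_even f v : (forall z, differentiable f z) ->
  (forall z, f (- z) = f z) -> forall z, 'D_v f (- z) = - 'D_v f z.
Proof.
move=> df fe z.
have fR : f = (fun w => f (0 - w)) by apply: funext => w; rewrite sub0r fe.
by rewrite {2}fR derive_reflect ?sub0r ?opprK.
Qed.

Lemma derive_odd f v : (forall z, differentiable f z) ->
  (forall z, f (- z) = - f z) -> forall z, 'D_v f (- z) = 'D_v f z.
Proof.
move=> df fo z.
have fR : f = (fun w => - f (0 - w)) by apply: funext => w; rewrite sub0r fo opprK.
rewrite {2}fR derive_oppf ?derive_reflect ?sub0r ?opprK //.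
exact: derivable_reflect.
Qed.

End PointwiseRules.

Section Schwarz.
Context {R : realType} {V : normedModType R}.
Implicit Types (f g : V -> R) (a b u v w : V).

Lemma is_derive_line f b w (t : R) : derivable f (b + t *: w) w ->
  is_derive t 1 (fun s : R => f (b + s *: w)) ('D_w f (b + t *: w)).
Proof.
have quot : (fun h : R => h^-1 *: (((fun s : R => f (b + s *: w)) \o shift t) (h *: 1)
                                   - f (b + t *: w)))
    = (fun h : R => h^-1 *: ((f \o shift (b + t *: w)) (h *: w) - f (b + t *: w))).
  by apply: funext => h /=; rewrite [h *: 1]mulr1 scalerDl addrCA.
by move=> df; apply: DeriveDef; rewrite /derivable /derive quot.
Qed.

Lemma mvt_line f b w (h : R) : 0 < h ->
  (forall t : R, derivable f (b + t *: w) w) ->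
  exists2 t, t \in `]0, h[%R & f (b + h *: w) - f b = h * 'D_w f (b + t *: w).
Proof.
move=> h0 df.
have D t := @is_derive_line f b w t (df t).
have C : continuous (fun s : R => f (b + s *: w)).
  move=> t; apply/differentiable_continuous/derivable1_diffP.
  exact: (@ex_derive _ _ _ _ _ _ _ (D t)).
have [t t0h E] := MVT h0 (fun t _ => D t) (continuous_subspaceT C).
by exists t => //; move: E; rewrite scale0r addr0 subr0 mulrC.
Qed.

Lemma second_difference g a u v (h : R) : 0 < h ->
  (forall z, derivable g z u) -> (forall z, derivable ('D_u g) z v) ->
  exists s t, [/\ s \in `]0, h[%R, t \in `]0, h[%R &
   (g (a + h *: u + h *: v) - g (a + h *: u)) - (g (a + h *: v) - g a)
   = h * (h * 'D_v ('D_u g) (a + s *: u + t *: v))].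
Proof.
move=> h0 du dvu.
(* [F z = g (z + h v) - g z], with the shift written as a translation. *)
pose F z := g (z - - (h *: v)) - g z.
have dF z : derivable F z u by apply: derivable_subf => //; apply: derivable_translate.
have DF z : 'D_u F z = 'D_u g (z - - (h *: v)) - 'D_u g z.
  by rewrite derive_subf ?derive_translate //; apply: derivable_translate.
have [s s0h Es] := @mvt_line F a u h h0 (fun t => dF (a + t *: u)).
have [t t0h Et] := @mvt_line ('D_u g) (a + s *: u) v h h0 (fun t => dvu (a + s *: u + t *: v)).
exists s, t; split => //.
by move: Es; rewrite DF opprK Et /F opprK => <-.
Qed.

Lemma near_parallelogram a u v (s t e : R) : 0 < e ->
  s \in `]0, e / (`|u| + `|v| + 1)[%R -> t \in `]0, e / (`|u| + `|v| + 1)[%R ->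
  `|a - (a + s *: u + t *: v)| < e.
Proof.
move=> e0; set h := e / _; rewrite !in_itv /= => /andP[s0 sh] /andP[t0 th].
have pos : 0 < `|u| + `|v| + 1 by rewrite ltr_wpDl // addr_ge0.
have eE : e = h * (`|u| + `|v| + 1) by rewrite /h divfK // gt_eqF.
rewrite -addrA opprD addrA subrr add0r normrN.
apply: (le_lt_trans (ler_normD _ _)); rewrite !normrZ !gtr0_norm //.
have hu : s * `|u| <= h * `|u| by rewrite ler_wpM2r // ltW.
have hv : t * `|v| <= h * `|v| by rewrite ler_wpM2r // ltW.
rewrite eE; lra.
Qed.

Section MixedPartials.
Variables (g : V -> R) (u v : V).
Hypotheses (du : forall z, derivable g z u) (dv : forall z, derivable g z v).
Hypotheses (duv : forall z, derivable ('D_u g) z v)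
           (dvu : forall z, derivable ('D_v g) z u).

Lemma mixed_derivatives_meet a (e : R) : 0 < e ->
  exists p q, [/\ `|a - p| < e, `|a - q| < e & 'D_v ('D_u g) p = 'D_u ('D_v g) q].
Proof.
move=> e0; pose h := e / (`|u| + `|v| + 1).
have h0 : 0 < h by rewrite divr_gt0 // ltr_wpDl // addr_ge0.
have [s [t [s0 t0 Euv]]] := @second_difference g a u v h h0 du duv.
have [s' [t' [s0' t0' Evu]]] := @second_difference g a v u h h0 dv dvu.
have hE : h = e / (`|v| + `|u| + 1) by rewrite /h [`|v| + _]addrC.
exists (a + s *: u + t *: v), (a + s' *: v + t' *: u); split.
- exact: near_parallelogram.
- by apply: near_parallelogram; rewrite -?hE.
- have swap (x y z w : R) : x - y - (z - w) = x - z - (y - w) by ring.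
  apply: (mulfI (lt0r_neq0 h0)); apply: (mulfI (lt0r_neq0 h0)).
  apply: etrans (esym Euv) _; apply: etrans _ Evu.
  by rewrite [a + h *: v + _]addrAC swap.
Qed.

Lemma near_ball (P : V -> Prop) a : (\forall z \near a, P z) ->
  exists2 e : R, 0 < e & forall z, `|a - z| < e -> P z.
Proof.
by move=> /nbhs_ballP[e e0 aeP]; exists e => // z az; apply: aeP; rewrite -ball_normE.
Qed.

Lemma schwarz a :
  {for a, continuous ('D_v ('D_u g))} -> {for a, continuous ('D_u ('D_v g))} ->
  'D_v ('D_u g) a = 'D_u ('D_v g) a.
Proof.
move=> c1 c2; set A := 'D_v ('D_u g) a; set B := 'D_u ('D_v g) a.
apply/eqP; rewrite -subr_eq0; apply: contraT => AB.
have e0 : 0 < `|A - B| / 2 by rewrite divr_gt0 // normr_gt0.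
have [e1 e10 near1] := near_ball _ _ ((cvgrPdist_lt _ _).1 c1 _ e0).
have [e2 e20 near2] := near_ball _ _ ((cvgrPdist_lt _ _).1 c2 _ e0).
have e12 : 0 < Num.min e1 e2 by rewrite lt_min e10 e20.
have [p [q [ap aq Epq]]] := mixed_derivatives_meet a _ e12.
set w := 'D_u ('D_v g) q.
have Aw : `|A - w| < `|A - B| / 2.
  by rewrite /w -Epq; apply: near1; apply: lt_le_trans ap _; rewrite ge_min lexx.
have Bw : `|B - w| < `|A - B| / 2.
  by apply: near2; apply: lt_le_trans aq _; rewrite ge_min lexx orbT.
have := ler_normB (A - w) (B - w); rewrite opprB addrA subrK => tri.
by have := le_lt_trans tri (ltrD Aw Bw); rewrite -splitr ltxx.
Qed.

End MixedPartials.
End Schwarz.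

Section Coordinates.
Variables (R : realType) (d : nat).
Implicit Types (A : 'M[R]_d) (r : 'rV[R]_d).

Lemma mxapp_scale A (a : R) r : mxapp A (a *: r) = a *: mxapp A r.
Proof. by rewrite /mxapp scalemxAl. Qed.

Lemma mxapp_row A r : mxapp A r = \sum_(j < d) r 0 j *: mxapp A (evec R j).
Proof.
rewrite {1}(row_sum_delta r) /mxapp mulmx_suml; apply: eq_bigr => j _.
by rewrite scalemxAl.
Qed.

Lemma mxapp_evec A i j : mxapp A (evec R j) 0 i = A i j.
Proof. by rewrite /mxapp /evec -rowE !mxE. Qed.

(* Entry [i] of [u - a w]; rewriting with it leaves [u] and [w] folded. *)
Lemma rowBZ_entry (u w : 'rV[R]_d) (a : R) i : (u - a *: w) 0 i = u 0 i - a * w 0 i.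
Proof. by rewrite !mxE. Qed.

Lemma sum_mxvec_index M (F : 'I_(M * d) -> R) :
  \sum_(q < M * d) F q = \sum_(m < M) \sum_(j < d) F (mxvec_index m j).
Proof.
rewrite pair_big (reindex (uncurry (@mxvec_index M d))) /=; last exact: curry_mxvec_bij.
by apply: eq_bigr => -[m j] _.
Qed.

Lemma decode_mxvec_index M (m : 'I_M) (j : 'I_d) : Defs.decode (mxvec_index m j) = (m, j).
Proof. by rewrite /Defs.decode /mxvec_index cast_ordK enum_rankK. Qed.

(* Averaging [M] copies of a sum of [M] terms gives back the sum; this also
   holds for [M = 0], where both sides vanish. *)
Lemma scale_natV_sum M (F : 'I_M -> 'rV[R]_d) :
  M%:R^-1 *: (M%:R *: \sum_(m < M) F m) = \sum_(m < M) F m.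
Proof.
case: M F => [|M] F; first by rewrite big_ord0 !scaler0.
by rewrite scalerA mulVf ?pnatr_eq0 // scale1r.
Qed.

End Coordinates.

Lemma tkernel_even {R : realType} {d : nat} {phi : 'rV[R]_d -> R} :
  pd_kernel (tkernel phi) -> forall z, phi (- z) = phi z.
Proof. by move=> [ksym _] z; have := ksym z 0; rewrite /tkernel subr0 sub0r. Qed.

(* A [C3] profile is differentiable (for [d = 0] the space is trivial and
   every function is constant). *)
Lemma C3_differentiable {R : realType} {d : nat} {phi : 'rV[R]_d -> R} :
  C3 phi -> forall z, differentiable phi z.
Proof.
case: d phi => [|n] phi phiC3 z; last by case: (phiC3 ord0 ord0 ord0 z).
rewrite (_ : phi = cst (phi 0)); first exact: differentiable_cst.
by apply: funext => x; rewrite /= thinmx0.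
Qed.

Section EvenProfile.
Context {R : realType} {d : nat}.
Variable phi : 'rV[R]_d -> R.
Hypothesis phiC3 : C3 phi.
Hypothesis phi_even : forall z, phi (- z) = phi z.
Local Notation V := 'rV[R]_d.
Local Notation k := (tkernel phi).

Let phi_diff (z : V) : differentiable phi z := C3_differentiable phiC3 z.
Let pd1_diff i (z : V) : differentiable (pd i phi) z.
Proof. by case: (phiC3 i i i z). Qed.
Let pd2_diff i j (z : V) : differentiable (pd i (pd j phi)) z.
Proof. by case: (phiC3 j i i z). Qed.
Let pd3_cont l i j (z : V) : {for z, continuous (pd l (pd i (pd j phi)))}.
Proof. by case: (phiC3 j i l z). Qed.

Lemma pd1_odd j (z : V) : pd j phi (- z) = - pd j phi z.
Proof. exact: derive_even phi_diff phi_even z. Qed.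

Lemma pd2_even i j (z : V) : pd i (pd j phi) (- z) = pd i (pd j phi) z.
Proof. exact: derive_odd (pd1_diff j) (pd1_odd j) z. Qed.

Lemma pd3_odd l i j (z : V) :
  pd l (pd i (pd j phi)) (- z) = - pd l (pd i (pd j phi)) z.
Proof. exact: derive_even (pd2_diff i j) (pd2_even i j) z. Qed.

Lemma pd3_swap i j (z : V) : pd j (pd i (pd j phi)) z = pd i (pd j (pd j phi)) z.
Proof.
rewrite /pd; symmetry; apply: schwarz => w.
- exact/diff_derivable/pd1_diff.
- exact/diff_derivable/pd1_diff.
- exact/diff_derivable/(pd2_diff j j).
- exact/diff_derivable/(pd2_diff i j).
- exact: (pd3_cont i j j).
- exact: (pd3_cont j i j).
Qed.

Let pd_translate j (f : V -> R) (x y : V) :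
  pd j (fun x' => f (x' - y)) x = pd j f (x - y).
Proof. exact: derive_translate. Qed.
Let pd_reflect j (f : V -> R) (x y : V) : differentiable f (x - y) ->
  pd j (fun y' => f (x - y')) y = - pd j f (x - y).
Proof. exact: derive_reflect. Qed.
Let pd_oppf j (f : V -> R) (x : V) : derivable f x (evec R j) ->
  pd j (fun z => - f z) x = - pd j f x.
Proof. exact: derive_oppf. Qed.

Lemma d1_k j (x y : V) : d1 j k x y = pd j phi (x - y).
Proof. exact: pd_translate. Qed.

Lemma d2_k j (x y : V) : d2 j k x y = - pd j phi (x - y).
Proof. exact: pd_reflect. Qed.

Lemma d1d1_k j (x y : V) : d1 j (d1 j k) x y = pd j (pd j phi) (x - y).
Proof.
rewrite {1}/d1 (_ : (fun x' => _) = fun x' => pd j phi (x' - y)); first exact: pd_translate.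
by apply: funext => x'; apply: d1_k.
Qed.

Lemma d1d2_k i j (x y : V) : d1 i (d2 j k) x y = - pd i (pd j phi) (x - y).
Proof.
rewrite {1}/d1 (_ : (fun x' => _) = fun x' => - pd j phi (x' - y)).
  rewrite pd_oppf ?pd_translate //.
  exact/derivable_translate/diff_derivable.
by apply: funext => x'; apply: d2_k.
Qed.

Lemma d2d2_k j (x y : V) : d2 j (d2 j k) x y = pd j (pd j phi) (x - y).
Proof.
rewrite {1}/d2 (_ : (fun y' => _) = fun y' => - pd j phi (x - y')).
  by rewrite pd_oppf ?pd_reflect ?opprK //; apply: derivable_reflect.
by apply: funext => y'; apply: d2_k.
Qed.

Lemma d1d2d2_k i j (x y : V) :
  d1 i (d2 j (d2 j k)) x y = pd i (pd j (pd j phi)) (x - y).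
Proof.
rewrite {1}/d1 (_ : (fun x' => _) = fun x' => pd j (pd j phi) (x' - y)).
  exact: pd_translate.
by apply: funext => x'; apply: d2d2_k.
Qed.

Lemma Kcf_entry (y x : V) i j : Kcf phi y x i j = - pd i (pd j phi) (x - y).
Proof. by rewrite /Kcf /hess !mxE -pd2_even opprB. Qed.

Lemma Kcf_entry_deriv (y x : V) i j :
  pd j (fun x' => Kcf phi y x' i j) x = - pd i (pd j (pd j phi)) (x - y).
Proof.
rewrite (_ : (fun x' => _) = fun x' => - pd i (pd j phi) (y - x')); last first.
  by apply: funext => x'; rewrite /Kcf /hess !mxE.
rewrite pd_oppf ?pd_reflect ?opprK; last 2 first.
- exact: pd2_diff.
- exact: derivable_reflect.
by rewrite -[y - x]opprB pd3_odd pd3_swap.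
Qed.

Let pd_subf j (f g : V -> R) (x : V) :
  derivable f x (evec R j) -> derivable g x (evec R j) ->
  pd j (fun z => f z - g z) x = pd j f x - pd j g x.
Proof. exact: derive_subf. Qed.
Let pd_lincomb j n p (a : 'I_n -> 'I_p -> R) (F : 'I_n -> 'I_p -> V -> R) (x : V) :
  (forall m i, derivable (F m i) x (evec R j)) ->
  pd j (fun z => \sum_(m < n) \sum_(i < p) a m i * F m i z) x
  = \sum_(m < n) \sum_(i < p) a m i * pd j (F m i) x.
Proof. exact: derive_lincomb. Qed.

Section Estimator.
Context {M : nat}.
Variables (xs : 'I_M -> V) (lam : R) (c : 'cV[R]_(M * d)).

(* The kernel expansion [y |-> sum_m K_cf(y, x^m) c_m], where the block
   [c_m] of [c] collects the coordinates [c_(m, j)]. *)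
Definition Kexp (y : V) : V :=
  \sum_(m < M) \sum_(j < d) c (mxvec_index m j) 0 *: mxapp (Kcf phi y (xs m)) (evec R j).

Lemma Kexp_entry (y : V) i : Kexp y 0 i =
  \sum_(m < M) \sum_(j < d) c (mxvec_index m j) 0 * - pd i (pd j phi) (xs m - y).
Proof.
rewrite /Kexp summxE; apply: eq_bigr => m _; rewrite summxE; apply: eq_bigr => j _.
by rewrite mxE mxapp_evec Kcf_entry.
Qed.

Lemma zetahat_entry (y : V) i : zetahat (Kcf phi) xs y 0 i =
  M%:R^-1 * \sum_(m < M) \sum_(j < d) - pd i (pd j (pd j phi)) (xs m - y).
Proof.
rewrite mxE; congr (_ * _); apply: eq_bigr => m _; apply: eq_bigr => j _.
exact: Kcf_entry_deriv.
Qed.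

Lemma fhat_profile : fhat k xs lam c = fun y =>
  \sum_(m < M) \sum_(j < d) c (mxvec_index m j) 0 * pd j phi (xs m - y)
  - \sum_(m < M) \sum_(j < d) (lam^-1 * M%:R^-1) * pd j (pd j phi) (xs m - y).
Proof.
apply: funext => y.
rewrite /fhat /xihat [_ / lam]mulrC [lam^-1 * (_ * _)]mulrA; congr (_ - _).
  by apply: eq_bigr => m _; apply: eq_bigr => j _; rewrite d1_k.
rewrite mulr_sumr; apply: eq_bigr => m _; rewrite mulr_sumr.
by apply: eq_bigr => j _; rewrite d1d1_k.
Qed.

Lemma grad_fhat (y : V) :
  grad (fhat k xs lam c) y = Kexp y - lam^-1 *: zetahat (Kcf phi) xs y.
Proof.
apply/rowP => i; rewrite rowBZ_entry mxE Kexp_entry zetahat_entry.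
rewrite fhat_profile pd_subf; last 2 first.
- by apply: derivable_lincomb => m j; apply: derivable_reflect.
- by apply: derivable_lincomb => m j; apply: derivable_reflect.
rewrite pd_lincomb => [|m j]; last exact: derivable_reflect.
rewrite pd_lincomb => [|m j]; last exact: derivable_reflect.
congr (_ - _).
  apply: eq_bigr => m _; apply: eq_bigr => j _.
  by rewrite [in LHS]pd_reflect //; apply: pd1_diff.
rewrite mulrA mulr_sumr; apply: eq_bigr => m _; rewrite mulr_sumr.
by apply: eq_bigr => j _; rewrite [in LHS]pd_reflect //; apply: pd2_diff.
Qed.

Lemma Gmat_mul l i : (Gmat k xs *m c) (mxvec_index l i) 0 = Kexp (xs l) 0 i.
Proof.
rewrite mxE sum_mxvec_index Kexp_entry; apply: eq_bigr => m _; apply: eq_bigr => j _.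
rewrite mxE !decode_mxvec_index /= d1d2_k mulrC.
by rewrite -[xs l - xs m]opprB pd2_even.
Qed.

Lemma bvec_entry l i : bvec k xs (mxvec_index l i) 0 = zetahat (Kcf phi) xs (xs l) 0 i.
Proof.
rewrite mxE decode_mxvec_index /= zetahat_entry; congr (_ * _).
apply: eq_bigr => m _; apply: eq_bigr => j _.
by rewrite d1d2d2_k -[xs m - xs l]opprB pd3_odd opprK.
Qed.

Hypothesis lam_neq0 : lam != 0.
Hypothesis c_solves : (Gmat k xs + (M%:R * lam)%:M) *m c = lam^-1 *: bvec k xs.

Lemma grad_fhat_at_data l :
  grad (fhat k xs lam c) (xs l) = - (M%:R * lam) *: \row_j c (mxvec_index l j) 0.
Proof.
apply/rowP => i; rewrite grad_fhat rowBZ_entry.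
have -> : (- (M%:R * lam) *: \row_j c (mxvec_index l j) 0) 0 i
    = - (M%:R * lam * c (mxvec_index l i) 0) by rewrite !mxE mulNr.
rewrite -Gmat_mul -bvec_entry.
have := congr1 (fun A : 'cV[R]_(M * d) => A (mxvec_index l i) 0) c_solves.
rewrite /= mulmxDl mul_scalar_mx mxE [(_ *: c) _ _]mxE [(_ *: bvec _ _) _ _]mxE => <-.
by rewrite opprD addrA subrr add0r.
Qed.

Lemma grad_fhat_solves (y : V) :
  Lhat (Kcf phi) xs (grad (fhat k xs lam c)) y + lam *: grad (fhat k xs lam c) y
  = - zetahat (Kcf phi) xs y.
Proof.
have sampled : \sum_(l < M) mxapp (Kcf phi y (xs l)) (grad (fhat k xs lam c) (xs l))
    = M%:R *: \sum_(l < M) - lam *: \sum_(j < d)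
        c (mxvec_index l j) 0 *: mxapp (Kcf phi y (xs l)) (evec R j).
  rewrite scaler_sumr; apply: eq_bigr => l _.
  rewrite grad_fhat_at_data mxapp_scale mxapp_row scalerA mulrN.
  by congr (_ *: _); apply: eq_bigr => j _; rewrite mxE.
rewrite /Lhat sampled scale_natV_sum -scaler_sumr -/(Kexp y) grad_fhat.
by rewrite scalerBr scalerA mulfV // scale1r scaleNr addKr.
Qed.

End Estimator.
End EvenProfile.

Section RKHS.
Context {R : realType} {d : nat} {T : Type} {K : T -> T -> 'M[R]_d}.
Context {H : set (T -> 'rV[R]_d)} {ip : (T -> 'rV[R]_d) -> (T -> 'rV[R]_d) -> R}.
Hypothesis HK : is_vRKHS K H ip.
Implicit Types (f g h : T -> 'rV[R]_d).

Lemma rkhs0 : H (fun _ => 0).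
Proof. by case: HK. Qed.

Lemma rkhsD f g : H f -> H g -> H (fun y => f y + g y).
Proof. by case: HK => _ [HD _]; apply: HD. Qed.

Lemma rkhsZ (a : R) f : H f -> H (fun y => a *: f y).
Proof. by case: HK => _ [_ [HZ _]]; apply: HZ. Qed.

Lemma rkhs_section (x : T) (v : 'rV[R]_d) : H (fun y => mxapp (K y x) v).
Proof. by case: HK => _ [_ [_ [_ [_ [_ [_ [_ [HKx _]]]]]]]]; apply: HKx. Qed.

Lemma ip_sym f g : H f -> H g -> ip f g = ip g f.
Proof. by case: HK => _ [_ [_ [Hsym _]]]; apply: Hsym. Qed.

Lemma ip_linear (a : R) {f g h} : H f -> H g -> H h ->
  ip (fun y => a *: f y + g y) h = a * ip f h + ip g h.
Proof. by case: HK => _ [_ [_ [_ [Hlin _]]]]; apply: Hlin. Qed.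

Lemma ip_ge0 {f} : H f -> 0 <= ip f f.
Proof. by case: HK => _ [_ [_ [_ [_ [Hpos _]]]]]; apply: Hpos. Qed.

Lemma ip_eq0 {f} : H f -> ip f f = 0 -> f = (fun _ => 0).
Proof. by case: HK => _ [_ [_ [_ [_ [_ [Hdef _]]]]]]; apply: Hdef. Qed.

Lemma ip_reproducing f (x : T) (v : 'rV[R]_d) : H f ->
  ip f (fun y => mxapp (K y x) v) = dotv (f x) v.
Proof. by case: HK => _ [_ [_ [_ [_ [_ [_ [_ [_ Hrep]]]]]]]]; apply: Hrep. Qed.

Lemma rkhsB f g : H f -> H g -> H (fun y => f y - g y).
Proof.
move=> Hf Hg; rewrite (_ : (fun y => _) = fun y => f y + (-1) *: g y).
  by apply: rkhsD => //; apply: rkhsZ.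
by apply: funext => y; rewrite scaleN1r.
Qed.

Lemma rkhs_sum n (F : 'I_n -> T -> 'rV[R]_d) :
  (forall i, H (F i)) -> H (fun y => \sum_(i < n) F i y).
Proof.
elim: n F => [|n IH] F HF.
  rewrite (_ : (fun y => _) = fun _ => 0); first exact: rkhs0.
  by apply: funext => y; rewrite big_ord0.
rewrite (_ : (fun y => _) = fun y => \sum_(i < n) F (widen_ord (leqnSn n) i) y + F ord_max y).
  by apply: rkhsD => //; apply: IH.
by apply: funext => y; rewrite big_ord_recr.
Qed.

Lemma rkhs_kernel_comb {M} (ys : 'I_M -> T) (a : 'I_M -> 'I_d -> R) :
  H (fun y => \sum_(m < M) \sum_(j < d) a m j *: mxapp (K y (ys m)) (evec R j)).
Proof.
apply: rkhs_sum => m; apply: rkhs_sum => j.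
by apply: rkhsZ; apply: rkhs_section.
Qed.

Lemma ip0 h : H h -> ip (fun _ => 0) h = 0.
Proof.
move=> Hh; have := ip_linear 1 rkhs0 rkhs0 Hh.
rewrite (_ : (fun _ => _) = fun _ => 0); last by apply: funext => y; rewrite scaler0 addr0.
by move=> /esym /eqP; rewrite mul1r -subr_eq0 addrK => /eqP.
Qed.

Lemma ipZ (a : R) {f h} : H f -> H h -> ip (fun y => a *: f y) h = a * ip f h.
Proof.
move=> Hf Hh; have := ip_linear a Hf rkhs0 Hh.
rewrite (_ : (fun y => _) = fun y => a *: f y) ?ip0 ?addr0 //.
by apply: funext => y; rewrite addr0.
Qed.

Lemma ipD {f g h} : H f -> H g -> H h -> ip (fun y => f y + g y) h = ip f h + ip g h.
Proof.
move=> Hf Hg Hh; have := ip_linear 1 Hf Hg Hh.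
rewrite (_ : (fun y => _) = fun y => f y + g y) ?mul1r //.
by apply: funext => y; rewrite scale1r.
Qed.

Lemma ip_sum n (F : 'I_n -> T -> 'rV[R]_d) h : (forall i, H (F i)) -> H h ->
  ip (fun y => \sum_(i < n) F i y) h = \sum_(i < n) ip (F i) h.
Proof.
elim: n F => [|n IH] F HF Hh.
  rewrite (_ : (fun y => _) = fun _ => 0); last by apply: funext => y; rewrite big_ord0.
  by rewrite ip0 // big_ord0.
rewrite (_ : (fun y => _) = fun y => \sum_(i < n) F (widen_ord (leqnSn n) i) y + F ord_max y).
  by rewrite ipD ?IH ?big_ord_recr //; apply: rkhs_sum.
by apply: funext => y; rewrite big_ord_recr.
Qed.

Lemma dotv_ge0 (u : 'rV[R]_d) : 0 <= dotv u u.
Proof.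
by rewrite /dotv mxE; apply: sumr_ge0 => j _; rewrite mxE -expr2 sqr_ge0.
Qed.

Section Empirical.
Context {M : nat}.
Variable xs : 'I_M -> T.

Lemma Lhat_in h : H (Lhat K xs h).
Proof. by apply: rkhsZ; apply: rkhs_sum => m; apply: rkhs_section. Qed.

Lemma Lhat_psd h : H h -> 0 <= ip (Lhat K xs h) h.
Proof.
move=> Hh; rewrite (_ : Lhat K xs h = fun y =>
    \sum_(m < M) M%:R^-1 *: mxapp (K y (xs m)) (h (xs m))); last first.
  by apply: funext => y; rewrite /Lhat scaler_sumr.
rewrite ip_sum => [|m|//]; last by apply: rkhsZ; apply: rkhs_section.
apply: sumr_ge0 => m _; have HKm := rkhs_section (xs m) (h (xs m)).
rewrite ipZ // ip_sym // ip_reproducing //.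
by rewrite mulr_ge0 ?invr_ge0 ?ler0n ?dotv_ge0.
Qed.

Lemma LhatB f g t : Lhat K xs (fun y => f y - g y) t = Lhat K xs f t - Lhat K xs g t.
Proof.
rewrite /Lhat -scalerBr -sumrB; congr (_ *: _); apply: eq_bigr => m _.
by rewrite /mxapp mulmxBl.
Qed.

Lemma regularized_unique {lam : R} {f g} : 0 < lam -> H f -> H g ->
  (forall t, Lhat K xs f t + lam *: f t = Lhat K xs g t + lam *: g t) -> f = g.
Proof.
move=> lam_gt0 Hf Hg Efg; pose h y := f y - g y.
have Hh : H h by apply: rkhsB.
have Lh0 t : Lhat K xs h t + lam *: h t = 0.
  by rewrite LhatB /h scalerBr addrACA -opprD Efg subrr.
have HL := Lhat_in h.
have HlamH : H (fun y => lam *: h y) by apply: rkhsZ.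
have : ip (Lhat K xs h) h + lam * ip h h = 0.
  rewrite -(ipZ lam Hh Hh) -(ipD HL HlamH Hh).
  by rewrite (funext Lh0) ip0.
have hpos : 0 <= lam * ip h h by apply: mulr_ge0; [exact: ltW | exact: ip_ge0].
move/eqP; rewrite paddr_eq0 ?Lhat_psd // mulf_eq0 (gt_eqF lam_gt0) /=.
move=> /andP[_ /eqP /(ip_eq0 Hh) h0].
apply: funext => t; apply/eqP; rewrite -subr_eq0.
by move: (congr1 (fun F => F t) h0); rewrite /h /= => ->.
Qed.

End Empirical.
End RKHS.

Theorem mainTheorem11 (R : realType) (d M : nat) (X : set 'rV[R]_d)
    (phi : 'rV[R]_d -> R) (xs : 'I_M -> {x : 'rV[R]_d | X x}) (lam : R)
    (c : 'cV[R]_(M * d))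
    (H : set ({x : 'rV[R]_d | X x} -> 'rV[R]_d))
    (ip : ({x : 'rV[R]_d | X x} -> 'rV[R]_d) ->
          ({x : 'rV[R]_d | X x} -> 'rV[R]_d) -> R) :
  open X ->
  C3 phi ->
  pd_kernel (tkernel phi) ->
  0 < lam ->
  (* H is the RKHS of K_cf restricted to X *)
  is_vRKHS (fun s t : {x : 'rV[R]_d | X x} => Kcf phi (sval s) (sval t)) H ip ->
  (* zeta_hat (restricted to X) lies in H, so that (L + lam I)^{-1} zeta_hat makes sense *)
  H (fun t => zetahat (Kcf phi) (fun m => sval (xs m)) (sval t)) ->
  (* c solves (G + M lam I) c = b / lam *)
  (Gmat (tkernel phi) (fun m => sval (xs m)) + (M%:R * lam)%:M) *m c
    = lam^-1 *: bvec (tkernel phi) (fun m => sval (xs m)) ->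
  exists s : {x : 'rV[R]_d | X x} -> 'rV[R]_d,
    [/\ H s,
        (* (L_Kcf + lam I) s = - zeta_hat *)
        (forall t, Lhat (fun u v => Kcf phi (sval u) (sval v)) xs s t + lam *: s t
                   = - zetahat (Kcf phi) (fun m => sval (xs m)) (sval t)),
        (* s is the unique such element of H *)
        (forall s', H s' ->
           (forall t, Lhat (fun u v => Kcf phi (sval u) (sval v)) xs s' t + lam *: s' t
                      = - zetahat (Kcf phi) (fun m => sval (xs m)) (sval t)) ->
           s' = s) &
        (* and s = grad f_hat on X *)
        (forall t, s t = grad (fhat (tkernel phi) (fun m => sval (xs m)) lam c) (sval t))].
Proof.
move=> _ phiC3 kpd lam_gt0 HK Hzeta c_solves.
have phi_even := tkernel_even kpd.
pose xv m := sval (xs m).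
pose s (t : {x : 'rV[R]_d | X x}) := grad (fhat (tkernel phi) xv lam c) (sval t).
(* [s] solves the regularized equation, since [grad fhat] does on all of R^d. *)
have s_solves t : Lhat (fun u v => Kcf phi (sval u) (sval v)) xs s t + lam *: s t
                  = - zetahat (Kcf phi) xv (sval t).
  exact (grad_fhat_solves phi phiC3 phi_even xv lam c (lt0r_neq0 lam_gt0) c_solves (sval t)).
(* [s] is a kernel expansion minus a multiple of [zetahat], hence lies in [H]. *)
have Hs : H s.
  have -> : s = fun t => Kexp phi xv c (sval t) - lam^-1 *: zetahat (Kcf phi) xv (sval t).
    by apply: funext => t; exact (grad_fhat phi phiC3 phi_even xv lam c (sval t)).
  apply: (rkhsB HK); last exact: (rkhsZ HK).
  exact (rkhs_kernel_comb HK xs (fun m j => c (mxvec_index m j) 0)).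
exists s; split => // s' Hs' s'_solves.
apply: (regularized_unique HK xs lam_gt0 Hs' Hs) => t.
by rewrite s_solves.
Qed.
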